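(* Let $k\ge1$, $\tau\in(0,1)$, $f(s)=s-\frac{s}{\tau}+\frac{\mathbb{E}[\min\{\mathrm{Pois}(sk),k\}]}{\tau k}$, $\alpha_k^\tau=\sup_{0\le s\le1}f(s)$, $\beta_k^\tau=\sup_{s\ge0}f(s)$, and let $s^*_\alpha,s^*_\beta$ be the respective maximizers. Then $s^*_\alpha=s^*_\beta$ (and hence $\alpha_k^\tau=\beta_k^\tau$) if and only if $$\tau\le1-e^{-k}\sum_{j=0}^{k-1}\frac{k^j}{j!}.$$ In particular, this condition holds for every $k\ge1$ whenever $\tau\le1/2$.
   Context: $\mathrm{Pois}(\lambda)$ denotes a Poisson random variable with mean $\lambda$. The function $f$ is concave on $[0,\infty)$, so the maximizers are well defined. *)

From Stdlib Require Import Reals Lra.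
From Coquelicot Require Import Coquelicot.
Open Scope R_scope.

Definition pois_pmf (lam : R) (j : nat) : R :=
  exp (- lam) * lam ^ j / INR (Factorial.fact j).

Definition E_min_pois (lam : R) (k : nat) : R :=
  Series (fun j => INR (Nat.min j k) * pois_pmf lam j).

Definition f_obj (k : nat) (tau s : R) : R :=
  s - s / tau + E_min_pois (s * INR k) k / (tau * INR k).

Definition is_maximizer (P : R -> Prop) (g : R -> R) (x : R) : Prop :=
  P x /\ forall y, P y -> g y <= g x.

(* 1 - e^{-k} sum_{j=0}^{k-1} k^j / j!   (requires k >= 1) *)
Definition threshold (k : nat) : R :=
  1 - exp (- INR k) * sum_f_R0 (fun j => INR k ^ j / INR (Factorial.fact j)) (k - 1).

(* Since d/dλ E[min(Pois λ, k)] = P(Pois λ <= k-1), the objective has derivative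
   f'(s) = (P(Pois(sk) <= k-1) - (1 - τ)) / τ, which is strictly decreasing because the
   Poisson CDF decreases in λ.  So f is strictly concave on [0, ∞): its maximizer over
   [0, ∞) is unique, and it lies in [0, 1] (equivalently, equals the maximizer over [0, 1])
   exactly when f'(1) <= 0, i.e. when τ <= 1 - P(Pois(k) <= k-1).  For τ <= 1/2 it remains
   to see P(Pois(k) <= k-1) <= 1/2: pair each term k^j/j! with j < k with the larger term
   k^(2k-1-j)/(2k-1-j)!, and bound both halves together by e^k. *)

From Stdlib Require Import Reals Lra Lia.
From Coquelicot Require Import Coquelicot.
Open Scope R_scope.

Notation fact := Factorial.fact.

Lemma is_series_finite (a : nat -> R) (N : nat) :
  (forall j, (N < j)%nat -> a j = 0) -> is_series a (sum_f_R0 a N).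
Proof.
  intros a_zero. apply is_series_Reals. intros eps Heps. exists N. intros m Hm.
  assert (sum_const : forall d, sum_f_R0 a (N + d) = sum_f_R0 a N).
  { induction d as [|d IH]; [now rewrite Nat.add_0_r|].
    rewrite Nat.add_succ_r. simpl. rewrite IH, a_zero by lia. ring. }
  replace m with (N + (m - N))%nat by lia. rewrite sum_const.
  unfold R_dist. rewrite Rminus_diag, Rabs_R0. lra.
Qed.

Lemma sum_f_R0_partial_sums (a : nat -> R) (n : nat) :
  sum_f_R0 (fun m => sum_f_R0 a m) n = sum_f_R0 (fun j => (INR (S n) - INR j) * a j) n.
Proof.
  induction n as [|n IH]; [simpl; ring|].
  rewrite !tech5, IH.
  rewrite (sum_eq (fun j => (INR (S (S n)) - INR j) * a j)
             (fun j => (INR (S n) - INR j) * a j + a j)).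
  2:{ intros i _. rewrite (S_INR (S n)). ring. }
  rewrite plus_sum, (S_INR (S n)). ring.
Qed.

Definition exp_partial_sum (n : nat) (x : R) : R :=
  sum_f_R0 (fun j => x ^ j / INR (fact j)) n.

Definition pois_cdf (n : nat) (lam : R) : R := exp (- lam) * exp_partial_sum n lam.

Lemma pois_cdf_sum_pmf (n : nat) (lam : R) : pois_cdf n lam = sum_f_R0 (pois_pmf lam) n.
Proof.
  unfold pois_cdf, exp_partial_sum, pois_pmf. rewrite scal_sum.
  apply sum_eq. intros j _. unfold Rdiv. ring.
Qed.

Lemma pois_pmf_pos (lam : R) (j : nat) : 0 < lam -> 0 < pois_pmf lam j.
Proof.
  intros Hlam. unfold pois_pmf, Rdiv.
  apply Rmult_lt_0_compat; [apply Rmult_lt_0_compat|].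
  - apply exp_pos.
  - now apply pow_lt.
  - apply Rinv_0_lt_compat, INR_fact_lt_0.
Qed.

Lemma is_series_pois_pmf (lam : R) : is_series (pois_pmf lam) 1.
Proof.
  assert (H := is_series_scal (K := R_AbsRing) (exp (- lam)) _ _ (is_exp_Reals lam)).
  replace 1 with (exp (- lam) * exp lam).
  2:{ rewrite <- exp_plus, Rplus_opp_l. apply exp_0. }
  eapply is_series_ext; [|exact H]. intros j. unfold pois_pmf.
  change (exp (- lam) * (pow_n lam j * / INR (fact j)) = exp (- lam) * lam ^ j / INR (fact j)).
  rewrite pow_n_pow. unfold Rdiv. ring.
Qed.

(* The tail-sum formula E[min(X, K)] = sum_{m < K} P(X > m). *)
Lemma E_min_pois_succ (lam : R) (n : nat) :
  E_min_pois lam (S n) = INR (S n) - sum_f_R0 (fun m => pois_cdf m lam) n.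
Proof.
  unfold E_min_pois. apply is_series_unique.
  set (shortfall := fun j => (INR (S n) - INR (Nat.min j (S n))) * pois_pmf lam j).
  assert (Hshort : is_series shortfall (sum_f_R0 shortfall n)).
  { apply is_series_finite. intros j Hj. unfold shortfall. rewrite Nat.min_r by lia. ring. }
  assert (Hsum : sum_f_R0 shortfall n = sum_f_R0 (fun m => pois_cdf m lam) n).
  { rewrite (sum_eq (fun m => pois_cdf m lam) (fun m => sum_f_R0 (pois_pmf lam) m))
      by (intros m _; apply pois_cdf_sum_pmf).
    rewrite sum_f_R0_partial_sums. apply sum_eq. intros j Hj.
    unfold shortfall. rewrite Nat.min_l by lia. reflexivity. }
  assert (Hmass := is_series_scal (K := R_AbsRing) (INR (S n)) _ _ (is_series_pois_pmf lam)).
  assert (H := is_series_minus _ _ _ _ Hmass Hshort).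
  rewrite <- Hsum.
  replace (INR (S n) - sum_f_R0 shortfall n)
    with (plus (scal (INR (S n)) 1) (opp (sum_f_R0 shortfall n)))
    by (change (INR (S n) * 1 - sum_f_R0 shortfall n = INR (S n) - sum_f_R0 shortfall n); ring).
  eapply is_series_ext; [|exact H]. intros j. unfold shortfall.
  change (INR (S n) * pois_pmf lam j - (INR (S n) - INR (Nat.min j (S n))) * pois_pmf lam j
          = INR (Nat.min j (S n)) * pois_pmf lam j).
  ring.
Qed.

Lemma is_derive_exp_partial_sum (n : nat) (x : R) :
  is_derive (exp_partial_sum n) x (exp_partial_sum n x - x ^ n / INR (fact n)).
Proof.
  induction n as [|n IH].
  - unfold exp_partial_sum; simpl.
    apply is_derive_ext with (fun _ => 1 / 1); [intros; simpl; field|].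
    auto_derive; [easy|field].
  - apply is_derive_ext with (fun y => exp_partial_sum n y + y ^ S n / INR (fact (S n))).
    { intros y. reflexivity. }
    replace (exp_partial_sum (S n) x - x ^ S n / INR (fact (S n)))
      with (exp_partial_sum n x - x ^ n / INR (fact n) + INR (S n) * x ^ n / INR (fact (S n))).
    2:{ unfold exp_partial_sum. rewrite tech5, fact_simpl, mult_INR. simpl pow.
        pose proof (INR_fact_lt_0 n). pose proof (lt_0_INR (S n) (Nat.lt_0_succ n)).
        field. lra. }
    apply (is_derive_plus (V := R_NormedModule)); [exact IH|].
    auto_derive; [easy|]. rewrite Rmult_1_l. reflexivity.
Qed.

Lemma is_derive_pois_cdf (n : nat) (lam : R) : is_derive (pois_cdf n) lam (- pois_pmf lam n).
Proof.
  replace (- pois_pmf lam n)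
    with (- exp (- lam) * exp_partial_sum n lam
          + exp (- lam) * (exp_partial_sum n lam - lam ^ n / INR (fact n)))
    by (unfold pois_pmf, Rdiv; ring).
  apply (is_derive_mult (fun l => exp (- l)) (exp_partial_sum n)).
  - auto_derive; [easy|ring].
  - apply is_derive_exp_partial_sum.
  - intros; apply Rmult_comm.
Qed.

Lemma is_derive_E_min_pois (n : nat) (lam : R) :
  is_derive (fun l => E_min_pois l (S n)) lam (pois_cdf n lam).
Proof.
  apply is_derive_ext with (fun l => INR (S n) - sum_n (fun m => pois_cdf m l) n).
  { intros l. rewrite sum_n_Reals. symmetry. apply E_min_pois_succ. }
  replace (pois_cdf n lam) with (0 - sum_n (fun m => - pois_pmf lam m) n).
  2:{ rewrite (sum_n_ext _ (fun m => scal (-1) (pois_pmf lam m)))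
        by (intros m; change (- pois_pmf lam m = -1 * pois_pmf lam m); ring).
      rewrite sum_n_scal_l, sum_n_Reals, pois_cdf_sum_pmf.
      change (0 - -1 * sum_f_R0 (pois_pmf lam) n = sum_f_R0 (pois_pmf lam) n). ring. }
  apply (is_derive_minus (V := R_NormedModule)); [auto_derive; easy|].
  apply (is_derive_sum_n (V := R_NormedModule) pois_cdf). intros m _. apply is_derive_pois_cdf.
Qed.

Lemma pois_cdf_decreasing (n : nat) (a b : R) : 0 <= a -> a < b -> pois_cdf n b < pois_cdf n a.
Proof.
  intros Ha Hab.
  destruct (MVT_cor2 (pois_cdf n) (fun l => - pois_pmf l n) a b Hab)
    as [c [Hmvt Hc]].
  { intros c _. apply is_derive_Reals, is_derive_pois_cdf. }
  pose proof (pois_pmf_pos c n ltac:(lra)). nra.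
Qed.

Lemma is_derive_f_obj (n : nat) (tau s : R) : tau <> 0 ->
  is_derive (f_obj (S n) tau) s ((pois_cdf n (s * INR (S n)) - (1 - tau)) / tau).
Proof.
  intros Htau. set (k := INR (S n)).
  assert (Hk : 0 < k) by apply lt_0_INR, Nat.lt_0_succ.
  assert (Hform : forall t : R,
    t * (1 - 1 / tau) + / (tau * k) * E_min_pois (t * k) (S n) = f_obj (S n) tau t).
  { intros t. unfold f_obj. fold k. field. split; lra. }
  apply (is_derive_ext _ _ _ _ Hform).
  replace ((pois_cdf n (s * k) - (1 - tau)) / tau)
    with (1 - 1 / tau + / (tau * k) * (k * pois_cdf n (s * k))) by (field; split; lra).
  apply (is_derive_plus (V := R_NormedModule)); [auto_derive; [easy|ring]|].
  apply is_derive_scal.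
  apply (is_derive_comp (fun l => E_min_pois l (S n)) (fun t => t * k)).
  - apply is_derive_E_min_pois.
  - auto_derive; [easy|ring].
Qed.

Lemma threshold_pois_cdf (n : nat) : threshold (S n) = 1 - pois_cdf n (INR (S n)).
Proof.
  unfold threshold, pois_cdf, exp_partial_sum. now rewrite Nat.sub_succ, Nat.sub_0_r.
Qed.

Section ConcaveMaximizers.

Variables f fp : R -> R.
Hypothesis f_deriv : forall x, is_derive f x (fp x).

Lemma deriv_nonpos_of_right_max (x : R) : (forall y, x < y -> f y <= f x) -> fp x <= 0.
Proof.
  intros right_max. apply Rnot_lt_le. intros fp_pos.
  destruct (proj1 (is_derive_Reals _ _ _) (f_deriv x) (fp x) fp_pos) as [[d d_pos] Hd].
  assert (Hh : d / 2 <> 0) by lra.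
  assert (Habs : Rabs (d / 2) < d) by (rewrite Rabs_right; lra).
  specialize (Hd (d / 2) Hh Habs).
  assert (Hquot : (f (x + d / 2) - f x) / (d / 2) <= 0).
  { apply Rmult_le_0_r; [apply Rle_minus, right_max; lra|].
    apply Rlt_le, Rinv_0_lt_compat. lra. }
  apply Rabs_def2 in Hd. lra.
Qed.

Hypothesis fp_decreasing : forall a b, 0 <= a -> a < b -> fp b < fp a.

Lemma mean_value (a b : R) : a < b -> exists c, a < c < b /\ f b - f a = fp c * (b - a).
Proof.
  intros Hab.
  destruct (MVT_cor2 f fp a b Hab) as [c [Hmvt Hc]]; [|now exists c].
  intros c _. apply is_derive_Reals, f_deriv.
Qed.

Lemma exists_gt_between (x y : R) :
  0 <= x -> x < y -> f x = f y -> exists c, x < c < y /\ f x < f c.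
Proof.
  intros Hx Hxy Hfxy.
  destruct (mean_value x y Hxy) as [c [Hc Hmvt]].
  assert (fp_c : fp c = 0).
  { assert (Hprod : fp c * (y - x) = 0) by lra.
    destruct (Rmult_integral _ _ Hprod); [easy|lra]. }
  destruct (mean_value x c (proj1 Hc)) as [d [Hd Hmvt']].
  assert (fp c < fp d) by (apply fp_decreasing; lra).
  exists c. split; [easy|nra].
Qed.

Lemma maximizer_unique (P : R -> Prop) (a b : R) :
  (forall x, P x -> 0 <= x) -> (forall x y z, P x -> P y -> x <= z <= y -> P z) ->
  is_maximizer P f a -> is_maximizer P f b -> a = b.
Proof.
  intros P_nonneg P_interval [Pa max_a] [Pb max_b].
  assert (Hab : f a = f b) by (apply Rle_antisym; auto).
  assert (no_two : forall x y, P x -> P y -> x < y -> f x = f y ->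
                   (forall z, P z -> f z <= f x) -> False).
  { intros x y Px Py Hxy Hf max_x.
    destruct (exists_gt_between x y (P_nonneg x Px) Hxy Hf) as [c [Hc Hfc]].
    assert (f c <= f x) by (apply max_x, (P_interval x y); auto; lra). lra. }
  destruct (Rtotal_order a b) as [Hlt|[Heq|Hgt]]; [|easy|]; exfalso.
  - now apply (no_two a b).
  - apply (no_two b a); auto.
Qed.

Lemma maximizer_le_iff (t sb : R) : 0 <= t ->
  is_maximizer (fun s => 0 <= s) f sb -> (sb <= t <-> fp t <= 0).
Proof.
  intros Ht [Hsb max_b]. split.
  - intros [Hlt| ->].
    + destruct (mean_value sb t Hlt) as [c [Hc Hmvt]].
      assert (fp t < fp c) by (apply fp_decreasing; lra).
      assert (f t <= f sb) by (apply max_b; lra). nra.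
    + apply deriv_nonpos_of_right_max. intros y Hy. apply max_b. lra.
  - intros fp_t. apply Rnot_lt_le. intros Hlt.
    destruct (mean_value t sb Hlt) as [c [Hc Hmvt]].
    assert (fp c < fp t) by (apply fp_decreasing; lra).
    assert (f t <= f sb) by (apply max_b; lra). nra.
Qed.

Lemma maximizers_eq_iff (sa sb : R) :
  is_maximizer (fun s => 0 <= s <= 1) f sa -> is_maximizer (fun s => 0 <= s) f sb ->
  (sa = sb <-> fp 1 <= 0).
Proof.
  intros Ha Hb. rewrite <- (maximizer_le_iff 1 sb) by (easy || lra). split.
  - intros <-. apply Ha.
  - intros Hsb1. apply (maximizer_unique (fun s => 0 <= s <= 1)); [intros; lra|intros; lra|easy|].
    destruct Hb as [Hsb max_b]. split; [lra|]. intros y Hy. apply max_b. lra.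
Qed.

End ConcaveMaximizers.

(* (a+1)...(a+2i+1) has 2i+1 factors centred at c = a+i+1, and (c-j)(c+j) <= c^2. *)
Lemma fact_le_pow_mul_fact (a i : nat) :
  (fact (a + 2 * i + 1) <= (a + i + 1) ^ (2 * i + 1) * fact a)%nat.
Proof.
  revert a. induction i as [|i IH]; intros a.
  - replace (a + 2 * 0 + 1)%nat with (S a) by lia. simpl. lia.
  - specialize (IH (S a)).
    replace (a + 2 * S i + 1)%nat with (S (S a + 2 * i + 1)) by lia.
    replace (a + S i + 1)%nat with (S a + i + 1)%nat by lia.
    replace (2 * S i + 1)%nat with (2 + (2 * i + 1))%nat by lia.
    rewrite Nat.pow_add_r, fact_simpl.
    rewrite fact_simpl in IH.
    set (c := (S a + i + 1)%nat) in *.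
    set (P := (c ^ (2 * i + 1))%nat) in *.
    set (G := fact (S a + 2 * i + 1)) in *.
    assert (Hcenter : (S (S a + 2 * i + 1) * S a <= c ^ 2)%nat) by (unfold c; simpl; nia).
    nia.
Qed.

Lemma pow_div_fact_le_mirror (n i : nat) : (i <= n)%nat ->
  INR (S n) ^ (n - i) / INR (fact (n - i)) <= INR (S n) ^ (S n + i) / INR (fact (S n + i)).
Proof.
  intros Hi. set (k := INR (S n)).
  assert (Hk : 0 < k) by apply lt_0_INR, Nat.lt_0_succ.
  assert (Hfact := fact_le_pow_mul_fact (n - i) i).
  replace (n - i + 2 * i + 1)%nat with (S n + i)%nat in Hfact by lia.
  replace (n - i + i + 1)%nat with (S n) in Hfact by lia.
  apply le_INR in Hfact. rewrite mult_INR, pow_INR in Hfact. fold k in Hfact.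
  pose proof (INR_fact_lt_0 (n - i)). pose proof (INR_fact_lt_0 (S n + i)).
  replace (S n + i)%nat with (n - i + (2 * i + 1))%nat at 1 by lia.
  rewrite pow_add. unfold Rdiv.
  apply Rmult_le_reg_r with (INR (fact (n - i)) * INR (fact (S n + i))); [nra|].
  replace (k ^ (n - i) * / INR (fact (n - i)) * (INR (fact (n - i)) * INR (fact (S n + i))))
    with (k ^ (n - i) * INR (fact (S n + i))) by (field; lra).
  replace (k ^ (n - i) * k ^ (2 * i + 1) * / INR (fact (S n + i))
             * (INR (fact (n - i)) * INR (fact (S n + i))))
    with (k ^ (n - i) * (k ^ (2 * i + 1) * INR (fact (n - i)))) by (field; lra).
  apply Rmult_le_compat_l; [apply pow_le; lra|exact Hfact].
Qed.

Lemma pois_cdf_at_mean_le_half (n : nat) : pois_cdf n (INR (S n)) <= 1 / 2.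
Proof.
  set (k := INR (S n)).
  set (a := fun j => k ^ j / INR (fact j)).
  assert (Hlow_high : exp_partial_sum n k <= sum_f_R0 (fun i => a (S n + i)%nat) n).
  { unfold exp_partial_sum. rewrite <- sum_f_R0_skip.
    apply sum_Rle. intros i Hi. now apply pow_div_fact_le_mirror. }
  assert (Hsplit : exp_partial_sum (S (2 * n)) k
                   = exp_partial_sum n k + sum_f_R0 (fun i => a (S n + i)%nat) n).
  { unfold exp_partial_sum. rewrite (tech2 _ n (S (2 * n))) by lia.
    now replace (S (2 * n) - S n)%nat with n by lia. }
  assert (Htaylor : exp_partial_sum (S (2 * n)) k <= exp k).
  { apply exp_ge_taylor, pos_INR. }
  assert (Hexp : exp (- k) * exp k = 1) by (rewrite <- exp_plus, Rplus_opp_l; apply exp_0).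
  pose proof (exp_pos (- k)).
  unfold pois_cdf. nra.
Qed.

Theorem proposition6p2 :
  forall (k : nat) (tau : R),
    (1 <= k)%nat -> 0 < tau < 1 ->
    (forall s_alpha s_beta : R,
        is_maximizer (fun s => 0 <= s <= 1) (f_obj k tau) s_alpha ->
        is_maximizer (fun s => 0 <= s) (f_obj k tau) s_beta ->
        (s_alpha = s_beta <-> tau <= threshold k))
    /\ (tau <= 1 / 2 -> tau <= threshold k).
Proof.
  intros k tau Hk Htau. destruct k as [|n]; [lia|].
  assert (Hk_pos : 0 < INR (S n)) by apply lt_0_INR, Nat.lt_0_succ.
  assert (Hinv : 0 < / tau) by (apply Rinv_0_lt_compat; lra).
  rewrite threshold_pois_cdf. split.
  - intros sa sb Ha Hb.
    rewrite (maximizers_eq_iff (f_obj (S n) tau)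
               (fun s => (pois_cdf n (s * INR (S n)) - (1 - tau)) / tau)); auto.
    + rewrite Rmult_1_l. unfold Rdiv.
      assert (Hcancel : tau * / tau = 1) by (apply Rinv_r; lra).
      split; intros Hsign; nra.
    + intros s. apply is_derive_f_obj. lra.
    + intros a b Ha0 Hab. apply Rmult_lt_compat_r; [easy|].
      apply Rplus_lt_compat_r, pois_cdf_decreasing; nra.
  - pose proof (pois_cdf_at_mean_le_half n). lra.
Qed.
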